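(* Let $K$ be a commutative ring which is injective as a module over itself and is a cogenerator of the category $\mathrm{Mod}_K$ of $K$-modules. Let $\mathcal S$ be the category of $K$-submodules of finite powers $K^n$, with the discrete topology, and $\mathcal V$ the closure of $\mathcal S$ under products and subobjects (submodules with induced topology) in the category of Hausdorff topological $K$-modules, with $K$ discrete. Then $\mathrm{chu}(\mathrm{Mod}_K,K)$ is equivalent to each of the categories $\mathcal V_s$ and $\mathcal V_w$ of topological $K$-modules in $\mathcal V$ that are strongly, respectively weakly, topologized with respect to their continuous $K$-linear functionals into $K$.
   Context: $\mathcal V_w$ consists of $V\in\mathcal V$ whose topology is the coarsest making all continuous $K$-linear maps $V\to K$ continuous; $\mathcal V_s$ consists of $V\in\mathcal V$ whose topology is the finest (among objects of $\mathcal V$ on the same underlying module) having the same continuous $K$-linear maps to $K$. $\mathrm{chu}(\mathrm{Mod}_K,K)$: objects are pairs $(A,X)$ of $K$-modules with a $K$-bilinear pairing $A\times X\to K$ such that both induced maps $A\to\mathrm{Hom}_K(X,K)$, $X\to\mathrm{Hom}_K(A,K)$ are injective; morphisms $(A,X)\to(B,Y)$ are pairs of $K$-linear maps $f:A\to B$, $g:Y\to X$ with $\langle fa,y\rangle=\langle a,gy\rangle$. *)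

From HB Require Import structures.
From mathcomp Require Import all_boot all_order all_algebra.
From Stdlib Require Import List.

Set Implicit Arguments.
Unset Strict Implicit.
Unset Printing Implicit Defensive.
Import GRing.Theory.
Local Open Scope ring_scope.

Record category := Category {
  ob : Type;
  hom : ob -> ob -> Type;
  idc : forall a, hom a a;
  comp : forall a b c, hom b c -> hom a b -> hom a c
}.
Arguments hom : clear implicits.
Arguments ob : clear implicits.
Arguments idc {_} _.
Arguments comp {_ _ _ _} _ _.

Record functor (C D : category) := Functor {
  fob : ob C -> ob D;
  fmap : forall a b, hom C a b -> hom D (fob a) (fob b);
  fmap_id : forall a, fmap (idc a) = idc (fob a);
  fmap_comp : forall a b c (g : hom C b c) (f : hom C a b),
      fmap (comp g f) = comp (fmap g) (fmap f)
}.
Arguments fob {C D} _ _.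
Arguments fmap {C D} _ {a b} _.

Definition is_iso (C : category) (a b : ob C) (f : hom C a b) :=
  exists g : hom C b a, comp g f = idc a /\ comp f g = idc b.

Definition cat_equiv (C D : category) : Prop :=
  exists (F : functor C D) (G : functor D C)
         (eta : forall a, hom C a (fob G (fob F a)))
         (eps : forall b, hom D (fob F (fob G b)) b),
    (forall a a' (f : hom C a a'),
        comp (eta a') f = comp (fmap G (fmap F f)) (eta a)) /\
    (forall a, is_iso (eta a)) /\
    (forall b b' (g : hom D b b'),
        comp g (eps b) = comp (eps b') (fmap F (fmap G g))) /\
    (forall b, is_iso (eps b)).

Section Modules.
Variable K : comPzRingType.

Definition lin (M N : lmodType K) (f : M -> N) : Prop :=
  forall (a : K) (x y : M), f (a *: x + y) = a *: f x + f y.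

Lemma lin_comp (M N P : lmodType K) (g : N -> P) (f : M -> N) :
  lin g -> lin f -> lin (fun x => g (f x)).
Proof. by move=> hg hf a x y; rewrite hf hg. Qed.

Lemma lin_id (M : lmodType K) : lin (fun x : M => x).
Proof. by []. Qed.

Definition self_injective : Prop :=
  forall (M N : lmodType K) (i : M -> N) (f : M -> K^o),
    lin i -> injective i -> lin f ->
    exists g : N -> K^o, lin g /\ forall x, g (i x) = f x.

Definition cogenerator : Prop :=
  forall (M N : lmodType K) (f g : M -> N),
    lin f -> lin g -> f <> g ->
    exists h : N -> K^o, lin h /\ (fun x => h (f x)) <> (fun x => h (g x)).

Record chu_ob := ChuOb {
  cA : lmodType K;
  cX : lmodType K;
  cp : cA -> cX -> K;
  cp_linl : forall x : cX, lin (fun a : cA => (cp a x : K^o));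
  cp_linr : forall a : cA, lin (fun x : cX => (cp a x : K^o));
  cp_injA : forall a a' : cA, (forall x, cp a x = cp a' x) -> a = a';
  cp_injX : forall x x' : cX, (forall a, cp a x = cp a x') -> x = x'
}.

Definition chu_hom (A B : chu_ob) :=
  { fg : (cA A -> cA B) * (cX B -> cX A) |
    [/\ lin fg.1, lin fg.2 & forall a y, cp (fg.1 a) y = cp a (fg.2 y)] }.

Definition chu_id (A : chu_ob) : chu_hom A A.
Proof. exists (fun a => a, fun x => x); split => //. Defined.

Definition chu_comp (A B C : chu_ob) (h : chu_hom B C) (k : chu_hom A B) :
  chu_hom A C.
Proof.
case: h => [[f' g'] [hf' hg' hadj']]; case: k => [[f g] [hf hg hadj]].
exists (fun a => f' (f a), fun z => g (g' z)); split => /=.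
- exact: lin_comp.
- exact: lin_comp.
- by move=> a y; rewrite hadj' hadj.
Defined.

Definition chu_cat : category := Category chu_id chu_comp.

Record topmod := TopMod {
  tm_car :> lmodType K;
  tm_open : (tm_car -> Prop) -> Prop;
  tm_open_T : tm_open (fun _ => True);
  tm_open_I : forall U V, tm_open U -> tm_open V ->
                tm_open (fun x => U x /\ V x);
  tm_open_U : forall F : (tm_car -> Prop) -> Prop,
                (forall U, F U -> tm_open U) ->
                tm_open (fun x => exists U, F U /\ U x);
  tm_add_cont : forall (x y : tm_car) W, tm_open W -> W (x + y) ->
      exists U V, [/\ tm_open U, tm_open V, U x, V y &
                      forall u v, U u -> V v -> W (u + v)];
  tm_opp_cont : forall (x : tm_car) W, tm_open W -> W (- x) ->
      exists U, [/\ tm_open U, U x & forall u, U u -> W (- u)];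
  (* scalar multiplication K x M -> M is continuous, K being discrete *)
  tm_scale_cont : forall (a : K) (x : tm_car) W, tm_open W -> W (a *: x) ->
      exists U, [/\ tm_open U, U x & forall u, U u -> W (a *: u)];
  tm_hausdorff : forall x y : tm_car, x <> y ->
      exists U V, [/\ tm_open U, tm_open V, U x, V y &
                      forall z, U z -> V z -> False]
}.
Arguments tm_open : clear implicits.

Definition cont (M N : topmod) (f : M -> N) : Prop :=
  forall W, tm_open N W -> tm_open M (fun x => W (f x)).

Definition dcont (M : topmod) (f : M -> K) : Prop :=
  forall S : K -> Prop, tm_open M (fun x => S (f x)).

(* W is open for the initial topology on T induced by the family
   p i : T -> Y i (Y i carrying the topology openY i): it is a union of
   finite intersections of sets p i ^-1 (U) with U open. *)
Definition initial_open (T I : Type) (Y : I -> Type)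
  (openY : forall i, (Y i -> Prop) -> Prop) (p : forall i, T -> Y i)
  (W : T -> Prop) : Prop :=
  forall x, W x -> exists (s : list I) (U : forall i, Y i -> Prop),
    (forall i, In i s -> openY i (U i) /\ U i (p i x)) /\
    (forall y, (forall i, In i s -> U i (p i y)) -> W y).

(* The class V: closure of S (submodules of finite powers K^n with the
   discrete topology) under products and subobjects, up to isomorphism. *)
Inductive inV : topmod -> Prop :=
| inV_S (M : topmod) (n : nat) (j : M -> 'rV[K]_n) :
    lin j -> injective j -> (forall W, tm_open M W) -> inV M
| inV_prod (M : topmod) (I : Type) (N : I -> topmod) (p : forall i, M -> N i) :
    (forall i, inV (N i)) ->
    (forall i, lin (p i)) ->
    (forall x y : M, (forall i, p i x = p i y) -> x = y) ->
    (forall y : forall i, N i, exists x : M, forall i, p i x = y i) ->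
    (forall W, tm_open M W <-> initial_open (fun i => tm_open (N i)) p W) ->
    inV M
| inV_sub (M N : topmod) (j : M -> N) :
    inV N -> lin j -> injective j ->
    (forall W, tm_open M W <->
               exists U, tm_open N U /\ forall x, W x <-> U (j x)) ->
    inV M.

Definition cfun (M : topmod) :=
  { f : M -> K^o | lin f /\ dcont (M := M) f }.

(* weakly topologized: the topology of M is the coarsest making all
   continuous linear functionals M -> K (K discrete) continuous *)
Definition weak_top (M : topmod) : Prop :=
  forall W, tm_open M W <->
    initial_open (fun (_ : cfun M) (S : K -> Prop) => True)
                 (fun (f : cfun M) (x : M) => (proj1_sig f x : K)) W.

(* strongly topologized: the topology of M is the finest among the
   topologies on the same module (transported along a linear bijection h)
   belonging to V and having the same continuous linear functionals *)
Definition strong_top (M : topmod) : Prop :=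
  forall (N : topmod) (h : N -> M),
    lin h -> bijective h -> inV N ->
    (forall f : M -> K^o, lin f ->
       (dcont (M := M) f <-> dcont (M := N) (fun n => f (h n)))) ->
    forall W, tm_open N W -> tm_open M (fun m => exists n, W n /\ h n = m).

Definition top_hom (M N : topmod) := { f : M -> N | lin f /\ cont f }.

Definition top_id (M : topmod) : top_hom M M.
Proof. by exists (fun x => x); split => // W. Defined.

Definition top_comp (M N P : topmod) (g : top_hom N P) (f : top_hom M N) :
  top_hom M P.
Proof.
case: g => [g [lg cg]]; case: f => [f [lf cf]].
exists (fun x => g (f x)); split; first exact: lin_comp.
by move=> W /cg /cf.
Defined.

Definition Vs_ob := { M : topmod | inV M /\ strong_top M }.
Definition Vw_ob := { M : topmod | inV M /\ weak_top M }.

Definition Vs_cat : category :=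
  @Category Vs_ob (fun M N => top_hom (proj1_sig M) (proj1_sig N))
    (fun M => top_id _) (fun _ _ _ g f => top_comp g f).

Definition Vw_cat : category :=
  @Category Vw_ob (fun M N => top_hom (proj1_sig M) (proj1_sig N))
    (fun M => top_id _) (fun _ _ _ g f => top_comp g f).

End Modules.

(* Every module in V carries the topology generated by its continuous
   functionals into the discrete ring K: the coordinates generate the discrete
   topology of a submodule of K^n, and the property survives products and
   induced topologies.  So every object of V is weakly topologized, and also
   strongly topologized, since any topology from V with the same continuous
   functionals is generated by them, hence coarser.  The equivalence sends
   (A, X) to A with the weak topology defined by X, and M to the pair
   (M, continuous dual of M).  The one non-formal point is that X is the whole
   continuous dual of A: a continuous functional vanishes on the common kernel
   of finitely many x_1, ..., x_n in X, so it factors through a submodule of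
   K^n; by self-injectivity it extends to K^n, hence it is the pairing with
   some sum_k c_k x_k. *)
From Pilot Require Import Defs.
From HB Require Import structures.
From mathcomp Require Import all_boot all_order all_algebra.
From mathcomp Require Import boolp functions.
From Stdlib Require Import List.

Set Implicit Arguments.
Unset Strict Implicit.
Unset Printing Implicit Defensive.
Import GRing.Theory.
Local Open Scope ring_scope.

Lemma sig_eq (T : Type) (P : T -> Prop) (u v : {x | P x}) :
  sval u = sval v -> u = v.
Proof. by case: u v => [x px] [y py] /= xy; exact: eq_exist. Qed.

Lemma InP (T : eqType) (x : T) (s : list T) : reflect (In x s) (x \in s).
Proof.
elim: s => [|y s IH]; first by constructor.
rewrite inE; apply: (iffP orP) => /=.
- by case=> [/eqP ->|/IH xs]; [left|right].
- by case=> [->|/IH xs]; [left|right].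
Qed.

Lemma exists_common_list (T J : Type) (A : list T -> J -> Prop) (s : list J) :
  (forall ts ts' j, (forall t, In t ts -> In t ts') -> A ts j -> A ts' j) ->
  (forall j, In j s -> exists ts, A ts j) ->
  exists ts, forall j, In j s -> A ts j.
Proof.
move=> A_mono; elim: s => [|j s IH] hs; first by exists nil.
have [ts0 h0] := hs j (or_introl erefl).
have [ts1 h1] := IH (fun k hk => hs k (or_intror hk)).
exists (ts0 ++ ts1) => k [<-|hk].
- by apply: A_mono h0 => t ht; apply: in_or_app; left.
- by apply: A_mono (h1 k hk) => t ht; apply: in_or_app; right.
Qed.

Lemma initial_open_proj (T I : Type) (Y : I -> Type)
    (openY : forall i, (Y i -> Prop) -> Prop) (p : forall i, T -> Y i)
    (i : I) (V : Y i -> Prop) :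
  openY i V -> initial_open openY p (fun x => V (p i x)).
Proof.
move=> oV x Vx.
exists [:: i], (fun i' y => forall e : i' = i, V (eq_rect i' Y y i e)); split.
- move=> i' [<-|[]]; split; last by move=> e; rewrite (Prop_irrelevance e erefl).
  suff -> : (fun y => forall e : i = i, V (eq_rect i Y y i e)) = V by [].
  apply/predeqP => y; split; first by move/(_ erefl).
  by move=> Vy e; rewrite (Prop_irrelevance e erefl).
- by move=> y /(_ i (or_introl erefl)) /(_ erefl).
Qed.

Section TopologicalModules.
Variable K : comPzRingType.

Section LinearMaps.
Variables (M N : lmodType K) (f : M -> N).
Hypothesis f_lin : lin f.

Lemma lin0 : f 0 = 0.
Proof.
have e : f 0 = f 0 + f 0 by rewrite -{1}(addr0 0) -{1}(scale1r 0) f_lin scale1r.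
by apply: (addrI (f 0)); rewrite addr0 -e.
Qed.

Lemma linD x y : f (x + y) = f x + f y.
Proof. by rewrite -{1}(scale1r x) f_lin scale1r. Qed.

Lemma linZ a x : f (a *: x) = a *: f x.
Proof. by rewrite -(addr0 (a *: x)) f_lin lin0 addr0. Qed.

Lemma linN x : f (- x) = - f x.
Proof. by rewrite -scaleN1r linZ scaleN1r. Qed.

Lemma linB x y : f (x - y) = f x - f y.
Proof. by rewrite linD linN. Qed.

End LinearMaps.

Implicit Types M N : topmod K.

Lemma open_ext M (U V : M -> Prop) :
  (forall x, U x <-> V x) -> tm_open U -> tm_open V.
Proof. by move=> /predeqP ->. Qed.

Lemma open_of_nbhs M (W : M -> Prop) :
  (forall x, W x ->
     exists U : M -> Prop, [/\ tm_open U, U x & forall y, U y -> W y]) ->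
  tm_open W.
Proof.
move=> hW.
apply: (@open_ext _ (fun x => exists U : M -> Prop,
  (tm_open U /\ forall y, U y -> W y) /\ U x)); last by apply: tm_open_U => U [].
move=> x; split; first by case=> U [[_ UW] Ux]; exact: UW.
by move=> /hW [U [oU Ux UW]]; exists U.
Qed.

Lemma open_finI M (T : Type) (s : list T) (P : T -> M -> Prop) :
  (forall t, In t s -> tm_open (P t)) ->
  tm_open (fun y : M => forall t, In t s -> P t y).
Proof.
elim: s => [|t s IH] oP.
  by apply: open_ext (tm_open_T M) => x; split => // _ t [].
apply: open_ext (tm_open_I (oP t (or_introl erefl))
                           (IH (fun u hu => oP u (or_intror hu)))).
move=> y; split; first by move=> [Pt Ps] u [<-|hu]; [exact: Pt|exact: Ps].
by move=> Py; split=> [|u hu]; apply: Py; [left|right].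
Qed.

Lemma dcont_fiber_open M (f : M -> K) c : dcont f -> tm_open (fun y => f y = c).
Proof. by move=> cf; exact: (cf (fun k => k = c)). Qed.

Lemma dcont_of_locally_const M (f : M -> K) :
  (forall x, exists U : M -> Prop,
     [/\ tm_open U, U x & forall y, U y -> f y = f x]) ->
  dcont f.
Proof.
move=> hf S; apply: open_of_nbhs => x Sfx; have [U [oU Ux Uf]] := hf x.
by exists U; split => // y /Uf ->.
Qed.

Lemma dcont2 M (op : K -> K -> K) (f g : M -> K) :
  dcont f -> dcont g -> dcont (fun x => op (f x) (g x)).
Proof.
move=> cf cg; apply: dcont_of_locally_const => x.
exists (fun y => f y = f x /\ g y = g x); split => [||y [-> ->]] //.
exact: tm_open_I (dcont_fiber_open _ cf) (dcont_fiber_open _ cg).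
Qed.

Section WeakTopology.
Variables (M : lmodType K) (I : Type) (f : I -> M -> K^o).
Hypothesis f_lin : forall i, lin (f i).
Hypothesis f_sep : forall a b, (forall i, f i a = f i b) -> a = b.

Definition agree_on (s : list I) (a b : M) := forall i, In i s -> f i b = f i a.

Definition weak_open (W : M -> Prop) :=
  forall a, W a -> exists s, forall b, agree_on s a b -> W b.

Lemma agree_on_open s a : weak_open (agree_on s a).
Proof. by move=> b ab; exists s => c bc i hi; rewrite bc // ab. Qed.

Lemma weak_openT : weak_open (fun _ => True).
Proof. by move=> a _; exists nil. Qed.

Lemma weak_openI U V :
  weak_open U -> weak_open V -> weak_open (fun x => U x /\ V x).
Proof.
move=> oU oV a [Ua Va]; have [s1 h1] := oU a Ua; have [s2 h2] := oV a Va.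
exists (s1 ++ s2) => b ab; split; [apply: h1|apply: h2] => i hi;
  by apply: ab; apply: in_or_app; auto.
Qed.

Lemma weak_open_bigU (F : (M -> Prop) -> Prop) :
  (forall U, F U -> weak_open U) -> weak_open (fun x => exists U, F U /\ U x).
Proof.
move=> oF a [U [FU Ua]]; have [s hs] := oF U FU a Ua.
by exists s => b /hs Ub; exists U.
Qed.

Lemma weak_add_cont (x y : M) W : weak_open W -> W (x + y) ->
  exists U V, [/\ weak_open U, weak_open V, U x, V y &
                  forall u v, U u -> V v -> W (u + v)].
Proof.
move=> oW /oW [s hs]; exists (agree_on s x), (agree_on s y).
split=> //; try exact: agree_on_open.
by move=> u v xu yv; apply: hs => i hi; rewrite !linD // xu // yv.
Qed.

Lemma weak_opp_cont (x : M) W : weak_open W -> W (- x) ->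
  exists U, [/\ weak_open U, U x & forall u, U u -> W (- u)].
Proof.
move=> oW /oW [s hs]; exists (agree_on s x); split=> //; first exact: agree_on_open.
by move=> u xu; apply: hs => i hi; rewrite !linN // xu.
Qed.

Lemma weak_scale_cont (c : K) (x : M) W : weak_open W -> W (c *: x) ->
  exists U, [/\ weak_open U, U x & forall u, U u -> W (c *: u)].
Proof.
move=> oW /oW [s hs]; exists (agree_on s x); split=> //; first exact: agree_on_open.
by move=> u xu; apply: hs => i hi; rewrite !linZ // xu.
Qed.

Lemma weak_hausdorff (x y : M) : x <> y ->
  exists U V, [/\ weak_open U, weak_open V, U x, V y &
                  forall z, U z -> V z -> False].
Proof.
move=> xy; have [i fxy] : exists i, f i x <> f i y.
  by apply/existsNP => fxy; apply/xy/f_sep.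
exists (agree_on [:: i] x), (agree_on [:: i] y).
split=> //; try exact: agree_on_open.
by move=> z xz yz; apply: fxy; rewrite -(xz i) ?(yz i) //; left.
Qed.

Definition weak_topmod : topmod K :=
  @TopMod K M weak_open weak_openT weak_openI weak_open_bigU
    weak_add_cont weak_opp_cont weak_scale_cont weak_hausdorff.

End WeakTopology.

Definition Kdisc : topmod K :=
  @weak_topmod K^o unit (fun _ k => k) (fun _ => lin_id (M := K^o))
    (fun a b ab => ab tt).

Lemma Kdisc_open (W : Kdisc -> Prop) : tm_open W.
Proof. by move=> a Wa; exists [:: tt] => b /(_ tt (or_introl erefl)) ->. Qed.

Lemma Kdisc_inV : inV Kdisc.
Proof.
apply: (@inV_S K Kdisc 1 (fun k : K^o => const_mx k)); last exact: Kdisc_open.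
- by move=> a u v; apply/matrixP => i j; rewrite !mxE.
- by move=> x y /matrixP /(_ 0 0); rewrite !mxE.
Qed.

Section Power.
Variable I : Type.

Definition Kpow : topmod K :=
  @weak_topmod (I -> K^o) I (fun i phi => phi i) (fun i a x y => erefl)
    (fun a b ab => funext ab).

Lemma Kpow_inV : inV Kpow.
Proof.
apply: (@inV_prod K Kpow I (fun _ => Kdisc) (fun i phi => phi i)) => //.
- by move=> _; exact: Kdisc_inV.
- by move=> a b /funext.
- by move=> y; exists y.
move=> W; split => [oW x Wx|oW x Wx].
- have [s hs] := oW x Wx; exists s, (fun i k => k = x i).
  by split=> [i _|y ys]; [split=> //; exact: Kdisc_open|apply: hs].
- have [s [U [sU UW]]] := oW x Wx.
  exists s => y xy; apply: UW => i hi.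
  by rewrite /= (xy i hi); exact: (proj2 (sU i hi)).
Qed.

End Power.

Lemma weak_topmod_inV (M : lmodType K) (I : Type) (f : I -> M -> K^o)
    (f_lin : forall i, lin (f i))
    (f_sep : forall a b, (forall i, f i a = f i b) -> a = b) :
  inV (weak_topmod f_lin f_sep).
Proof.
apply: (@inV_sub K (weak_topmod f_lin f_sep) (Kpow I) (fun (a : M) i => f i a)).
- exact: Kpow_inV.
- by move=> c a b; apply/funext => i; exact: f_lin.
- by move=> a b ab; apply: (f_sep) => i; exact: (congr1 (fun g => g i) ab).
move=> W; split => [oW|[U [oU WU]] a Wa].
- exists (fun phi => exists s, forall b,
            (forall i, In i s -> f i b = phi i) -> W b); split.
  + move=> phi [s hs]; exists s => psi phipsi; exists s => b bpsi.
    by apply: hs => i hi; rewrite bpsi // phipsi.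
  + move=> x; split=> [/(oW x) //|[s hs]]; exact: hs.
- have [s hs] := oU _ (proj1 (WU a) Wa).
  by exists s => b ab; apply/WU/hs.
Qed.

Definition cfun_comp M N (h : M -> N) (h_lin : lin h) (h_cont : cont h)
    (g : cfun N) : cfun M :=
  exist _ (fun x => sval g (h x))
    (conj (lin_comp (proj1 (proj2_sig g)) h_lin)
          (fun S => h_cont _ (proj2 (proj2_sig g) S))).

Definition cfun_generated M :=
  forall W : M -> Prop, tm_open W -> forall x, W x -> exists fs : list (cfun M),
    forall y, (forall f, In f fs -> sval f y = sval f x) -> W y.

Lemma cfun_generated_preimage M N (h : M -> N) (h_lin : lin h) (h_cont : cont h)
    (U : N -> Prop) x :
  cfun_generated N -> tm_open U -> U (h x) ->
  exists fs : list (cfun M),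
    forall y, (forall f, In f fs -> sval f y = sval f x) -> U (h y).
Proof.
move=> gN oU Uhx; have [fs hfs] := gN U oU _ Uhx.
exists (map (cfun_comp h_lin h_cont) fs) => y xy; apply: hfs => g hg.
exact: (xy (cfun_comp h_lin h_cont g) (in_map _ _ _ hg)).
Qed.

Lemma inV_cfun_generated M : inV M -> cfun_generated M.
Proof.
elim=> {M} [M n j j_lin j_inj M_disc|M I N p _ IH p_lin _ _ M_top
           |M N j _ IH j_lin _ M_top] W oW x Wx.
- have coord_lin i : lin (fun m => (j m 0 i : K^o)).
    by move=> a u v; rewrite j_lin !mxE.
  pose coord i : cfun M := exist _ _ (conj (coord_lin i) (fun S => M_disc _)).
  exists (map coord (enum 'I_n)) => y xy; suff -> : y = x by [].
  apply: j_inj; apply/matrixP => i k; rewrite [i]ord1.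
  by apply: (xy (coord k)); apply/in_map/InP/mem_enum.
- have p_cont i : cont (p i) by move=> V oV; apply/M_top/initial_open_proj.
  have [s [U [sU UW]]] := proj1 (M_top W) oW x Wx.
  have [fs hfs] := @exists_common_list _ _ (fun fs i => forall y,
      (forall f, In f fs -> sval f y = sval f x) -> U i (p i y)) s
    (fun fs gs j fsgs h y xy => h y (fun f hf => xy f (fsgs f hf)))
    (fun i hi => cfun_generated_preimage (p_lin i) (p_cont i) (IH i)
                   (proj1 (sU i hi)) (proj2 (sU i hi))).
  by exists fs => y xy; apply: UW => i hi; apply: hfs.
- have j_cont : cont j by move=> V oV; apply/M_top; exists V.
  have [U [oU WU]] := proj1 (M_top W) oW.
  have [fs hfs] := cfun_generated_preimage j_lin j_cont IH oU (proj1 (WU x) Wx).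
  by exists fs => y /hfs /WU.
Qed.

Lemma cfun_generated_weak M : cfun_generated M -> weak_top M.
Proof.
move=> gM W; split=> [oW x Wx|oW].
- have [fs hfs] := gM W oW x Wx.
  exists fs, (fun f k => k = sval f x).
  by split=> [//|y xy]; apply: hfs => f hf; exact: xy.
apply: open_of_nbhs => x Wx; have [s [U [sU UW]]] := oW x Wx.
exists (fun y => forall f, In f s -> U f (sval f y)); split.
- by apply: open_finI => f _; exact: (proj2 (proj2_sig f) (U f)).
- by move=> f /sU [].
- exact: UW.
Qed.

(* Holds for every M: a topology from V is generated by its continuous
   functionals, which are continuous for the topology of M by assumption. *)
Lemma strong_topT M : strong_top M.
Proof.
move=> N h h_lin [hinv hK1 hK2] iN same_cfun W oW.
apply: open_of_nbhs => _ [n [Wn <-]].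
have [fs hfs] := inV_cfun_generated iN oW Wn.
have hinv_lin : lin hinv.
  by move=> a u v; apply: (can_inj hK1); rewrite h_lin !hK2.
have g_cont (g : cfun N) : dcont (M := M) (fun m => sval g (hinv m)).
  apply/same_cfun; first exact: lin_comp (proj1 (proj2_sig g)) hinv_lin.
  under eq_fun do rewrite hK1; exact: (proj2 (proj2_sig g)).
exists (fun m => forall g, In g fs -> sval g (hinv m) = sval g n); split.
- by apply: open_finI => g _; exact: dcont_fiber_open (g_cont g).
- by move=> g _; rewrite hK1.
- by move=> m nm; exists (hinv m); split; [exact: hfs|exact: hK2].
Qed.

Record lsubmod_closed (V : lmodType K) (P : V -> Prop) := LsubmodClosed {
  lsub0 : P 0;
  lsubD : forall x y, P x -> P y -> P (x + y);
  lsubN : forall x, P x -> P (- x);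
  lsubZ : forall a x, P x -> P (a *: x) }.

Section Lsubmod.
Variables (V : lmodType K) (P : V -> Prop).

Definition lsubmod of lsubmod_closed P := {x : V | P x}.

Variable P_closed : lsubmod_closed P.

HB.instance Definition _ := gen_eqMixin (lsubmod P_closed).
HB.instance Definition _ := gen_choiceMixin (lsubmod P_closed).

Definition lsub_zero : lsubmod P_closed := exist _ 0 (lsub0 P_closed).
Definition lsub_add (x y : lsubmod P_closed) : lsubmod P_closed :=
  exist _ (sval x + sval y) (lsubD P_closed (proj2_sig x) (proj2_sig y)).
Definition lsub_opp (x : lsubmod P_closed) : lsubmod P_closed :=
  exist _ (- sval x) (lsubN P_closed (proj2_sig x)).
Definition lsub_scale (a : K) (x : lsubmod P_closed) : lsubmod P_closed :=
  exist _ (a *: sval x) (lsubZ P_closed a (proj2_sig x)).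

Lemma lsub_addA : associative lsub_add.
Proof. by move=> x y z; apply: sig_eq; rewrite /= addrA. Qed.
Lemma lsub_addC : commutative lsub_add.
Proof. by move=> x y; apply: sig_eq; rewrite /= addrC. Qed.
Lemma lsub_add0 : left_id lsub_zero lsub_add.
Proof. by move=> x; apply: sig_eq; rewrite /= add0r. Qed.
Lemma lsub_addN : left_inverse lsub_zero lsub_opp lsub_add.
Proof. by move=> x; apply: sig_eq; rewrite /= addNr. Qed.

HB.instance Definition _ :=
  GRing.isZmodule.Build (lsubmod P_closed) lsub_addA lsub_addC lsub_add0 lsub_addN.

Lemma lsub_scaleA a b (v : lsubmod P_closed) :
  lsub_scale a (lsub_scale b v) = lsub_scale (a * b) v.
Proof. by apply: sig_eq; rewrite /= scalerA. Qed.
Lemma lsub_scale1 : left_id 1 lsub_scale.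
Proof. by move=> x; apply: sig_eq; rewrite /= scale1r. Qed.
Lemma lsub_scaleDr : right_distributive lsub_scale +%R.
Proof. by move=> a x y; apply: sig_eq; rewrite /= scalerDr. Qed.
Lemma lsub_scaleDl (v : lsubmod P_closed) : {morph lsub_scale^~ v : a b / a + b}.
Proof. by move=> a b; apply: sig_eq; rewrite /= scalerDl. Qed.

HB.instance Definition _ := GRing.Zmodule_isLmodule.Build K (lsubmod P_closed)
  lsub_scaleA lsub_scale1 lsub_scaleDr lsub_scaleDl.

End Lsubmod.

Section ContinuousDual.
Variable M : topmod K.

Definition is_cfun (f : M -> K^o) := lin f /\ dcont f.

Lemma is_cfun_closed : lsubmod_closed is_cfun.
Proof.
split.
- split=> [a x y|]; first by rewrite /= scaler0 addr0.
  by apply: dcont_of_locally_const => x; exists (fun _ => True); split;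
    [exact: tm_open_T| |].
- move=> f g [lf cf] [lg cg]; split; last exact: dcont2 cf cg.
  by move=> a x y; rewrite !fctE lf lg scalerDr addrACA.
- move=> f [lf cf]; split; last exact: (dcont2 (fun u _ => - u) cf cf).
  by move=> a x y; rewrite !fctE lf opprD scalerN.
- move=> c f [lf cf]; split; last exact: (dcont2 (fun u _ => c * u) cf cf).
  by move=> a x y; rewrite !fctE lf scalerDr !scalerA mulrC.
Qed.

Definition cdual : lmodType K := lsubmod is_cfun_closed.

Lemma cdual_pairing_linl (x : cdual) : lin (fun a : M => (sval x a : K^o)).
Proof. exact: (proj1 (proj2_sig x)). Qed.

Lemma cdual_pairing_linr (a : M) : lin (fun x : cdual => (sval x a : K^o)).
Proof. by []. Qed.

Lemma cdual_pairing_injX (x x' : cdual) :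
  (forall a, sval x a = sval x' a) -> x = x'.
Proof. by move=> xx'; apply/sig_eq/funext. Qed.

Hypothesis M_gen : cfun_generated M.

Lemma cdual_pairing_injA (a a' : M) :
  (forall x : cdual, sval x a = sval x a') -> a = a'.
Proof.
move=> aa'; apply: contrapT => neq.
have [U [V [oU oV Ua Va UV]]] := tm_hausdorff neq.
have [fs hfs] := M_gen oU Ua.
by apply: (UV a') => //; apply: hfs => f _; rewrite (aa' f).
Qed.

Definition dual_chu : chu_ob K :=
  @ChuOb K M cdual (fun a (x : cdual) => sval x a)
    cdual_pairing_linl cdual_pairing_linr cdual_pairing_injA cdual_pairing_injX.

End ContinuousDual.

Definition chu_weak (A : chu_ob K) : topmod K :=
  @weak_topmod (cA A) (cX A) (fun x a => cp a x) (fun x => cp_linl x)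
    (fun a b ab => cp_injA ab).

Section SelfInjective.
Hypothesis si : self_injective K.

(* Extend ph, viewed as a functional on the image of j, to all of K^n. *)
Lemma self_injective_coords (M : lmodType K) n (j : M -> 'rV[K]_n)
    (ph : M -> K^o) :
  lin j -> lin ph -> (forall a, j a = 0 -> ph a = 0) ->
  exists w : 'I_n -> K, forall a, ph a = \sum_k w k * j a 0 k.
Proof.
move=> j_lin ph_lin ker_j.
have ph_j a b : j a = j b -> ph a = ph b.
  move=> jab; apply/eqP; rewrite -subr_eq0 -(linB ph_lin).
  by apply/eqP/ker_j; rewrite (linB j_lin) jab subrr.
pose P v := exists a, v = j a.
have P_closed : lsubmod_closed P.
  split.
  - by exists 0; rewrite (lin0 j_lin).
  - by move=> _ _ [a ->] [b ->]; exists (a + b); rewrite (linD j_lin).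
  - by move=> _ [a ->]; exists (- a); rewrite (linN j_lin).
  - by move=> c _ [a ->]; exists (c *: a); rewrite (linZ j_lin).
pose pre (v : lsubmod P_closed) := proj1_sig (cid (proj2_sig v)).
have preP (v : lsubmod P_closed) : sval v = j (pre v).
  by rewrite /pre; case: cid.
pose ph' (v : lsubmod P_closed) : K^o := ph (pre v).
have ph'_lin : lin ph'.
  by move=> c v w; rewrite /ph' -ph_lin; apply: ph_j; rewrite j_lin -!preP.
have [g [g_lin g_ext]] :=
  si (i := fun v : lsubmod P_closed => sval v) (fun _ _ _ => erefl)
     (fun v w => @sig_eq _ _ v w) ph'_lin.
exists (fun k => g (delta_mx 0 k)) => a.
have -> : ph a = ph' (exist _ (j a) (ex_intro _ a erefl)).
  by apply: ph_j; rewrite -preP.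
rewrite -g_ext /= {1}(row_sum_delta (j a)) (big_morph g (linD g_lin) (lin0 g_lin)).
by apply: eq_bigr => k _; rewrite (linZ g_lin) mulrC.
Qed.

Lemma chu_weak_cfun_repr (A : chu_ob K) (phi : cfun (chu_weak A)) :
  exists x, forall a, cp a x = sval phi a.
Proof.
case: phi => [ph [ph_lin ph_cont]] /=.
have [s s_ker] : exists s : list (cX A),
    forall b, (forall x, In x s -> cp b x = 0) -> ph b = 0.
  have [s hs] := ph_cont (fun k => k = 0) 0 (lin0 ph_lin).
  exists s => b sb; apply: hs => x hx.
  by rewrite /= sb // (lin0 (cp_linl x)).
pose j (a : cA A) : 'rV[K]_(size s) := \row_k cp a (seq.nth 0 s k).
have j_lin : lin j.
  by move=> c a b; apply/matrixP => i k; rewrite !mxE (cp_linl _ c a b).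
have [w ph_w] : exists w : 'I_(size s) -> K,
    forall a, ph a = \sum_k w k * j a 0 k.
  apply: self_injective_coords => // a ja0; apply: s_ker => x /InP xs.
  have xs' : (index x s < size s)%N by rewrite index_mem.
  by move/matrixP: ja0 => /(_ 0 (Ordinal xs')); rewrite !mxE seq.nth_index.
exists (\sum_k w k *: seq.nth 0 s k) => a.
rewrite (big_morph (fun x => (cp a x : K^o)) (linD (cp_linr a)) (lin0 (cp_linr a))).
rewrite ph_w; apply: eq_bigr => k _.
by rewrite (linZ (cp_linr a)) mxE.
Qed.

End SelfInjective.

Section Equivalence.
Hypothesis si : self_injective K.
Variable Q : topmod K -> Prop.
Hypothesis inV_Q : forall M, inV M -> Q M.

Definition VQ_ob := {M : topmod K | inV M /\ Q M}.

Definition VQ_cat : category :=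
  @Category VQ_ob (fun M N : VQ_ob => top_hom (sval M) (sval N))
    (fun M : VQ_ob => top_id _) (fun _ _ _ g f => top_comp g f).

Definition weakO (A : chu_ob K) : VQ_ob :=
  exist _ (chu_weak A) (conj (weak_topmod_inV _ _) (inV_Q (weak_topmod_inV _ _))).

Lemma chu_weak_cont (A B : chu_ob K) (h : chu_hom A B) :
  cont (M := chu_weak A) (N := chu_weak B) (sval h).1.
Proof.
case: h => [[f g] [_ _ fg]] /= W oW a Wfa.
have [s hs] := oW _ Wfa.
exists (map g s) => b ab; apply: hs => y hy.
by rewrite /= !fg; exact: ab (g y) (in_map _ _ _ hy).
Qed.

Definition weak_map (A B : chu_ob K) (h : chu_hom A B) :
  Defs.hom VQ_cat (weakO A) (weakO B).
Proof.
by exists (sval h).1; split; [case: h => [? []]|exact: chu_weak_cont].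
Defined.

Definition weak_functor : functor (chu_cat K) VQ_cat.
Proof.
refine (@Functor (chu_cat K) VQ_cat weakO weak_map _ _).
- by move=> A; apply: sig_eq.
- by move=> A B C [[g1 g2] [? ? ?]] [[f1 f2] [? ? ?]]; apply: sig_eq.
Defined.

Definition dualO (M : VQ_ob) : chu_ob K :=
  dual_chu (inV_cfun_generated (proj1 (proj2_sig M))).

Definition dual_map (M N : VQ_ob) (h : Defs.hom VQ_cat M N) :
  chu_hom (dualO M) (dualO N).
Proof.
exists (sval h, cfun_comp (proj1 (proj2_sig h)) (proj2 (proj2_sig h))).
split=> //; first exact: (proj1 (proj2_sig h)).
by move=> a g g'; apply: sig_eq.
Defined.

Definition dual_functor : functor VQ_cat (chu_cat K).
Proof.
refine (@Functor VQ_cat (chu_cat K) dualO dual_map _ _).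
- by move=> M; apply: sig_eq; congr pair; apply/funext => g; apply: sig_eq.
- move=> M N P [g [lg cg]] [f [lf cf]]; apply: sig_eq => /=; congr pair.
  by apply/funext => z; apply: sig_eq.
Defined.

Section Unit.
Variable A : chu_ob K.

Definition cfun_repr (phi : cdual (chu_weak A)) : cX A :=
  proj1_sig (cid (chu_weak_cfun_repr si phi)).

Lemma cfun_reprP phi a : cp a (cfun_repr phi) = sval phi a.
Proof. by rewrite /cfun_repr; case: cid. Qed.

Lemma cfun_repr_lin : lin cfun_repr.
Proof.
move=> c u v; apply: cp_injX => a.
by rewrite cfun_reprP (cp_linr a c) !cfun_reprP.
Qed.

Lemma pairing_dcont (x : cX A) : dcont (M := chu_weak A) (fun a => cp a x).
Proof.
apply: dcont_of_locally_const => a.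
exists (agree_on (fun x a => cp a x) [:: x] a); split; first exact: agree_on_open.
- by move=> i [<-|[]].
- by move=> b /(_ x (or_introl erefl)).
Qed.

Definition pairing_cfun (x : cX A) : cdual (chu_weak A) :=
  exist _ (fun a => (cp a x : K^o)) (conj (cp_linl x) (@pairing_dcont x)).

Lemma pairing_cfun_lin : lin pairing_cfun.
Proof. by move=> c u v; apply/sig_eq/funext => a; exact: (cp_linr a c u v). Qed.

Definition chu_unit : chu_hom A (dualO (weakO A)) :=
  exist _ (id, cfun_repr)
    (And3 (lin_id (M := cA A)) cfun_repr_lin (fun a y => esym (cfun_reprP y a))).

Definition chu_unit_inv : chu_hom (dualO (weakO A)) A :=
  exist _ (id, pairing_cfun)
    (And3 (lin_id (M := cA A)) pairing_cfun_lin (fun a y => erefl)).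

Lemma chu_unit_iso : is_iso (C := chu_cat K) chu_unit.
Proof.
exists chu_unit_inv; split; apply: sig_eq => /=; congr pair; apply/funext.
- by move=> x; apply: cp_injX => a; rewrite cfun_reprP.
- by move=> phi; apply/sig_eq/funext => a /=; rewrite cfun_reprP.
Qed.

End Unit.

Lemma chu_unit_nat (A A' : chu_ob K) (f : chu_hom A A') :
  @Defs.comp (chu_cat K) _ _ _ (chu_unit A') f
  = Defs.comp (fmap dual_functor (fmap weak_functor f)) (chu_unit A).
Proof.
case: f => [[f1 f2] [f1_lin f2_lin adj]]; apply: sig_eq => /=; congr pair.
by apply/funext => z; apply: cp_injX => b; rewrite -adj !cfun_reprP.
Qed.

Section Counit.
Variable M : VQ_ob.

Lemma counit_cont : cont (M := chu_weak (dualO M)) (N := sval M) id.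
Proof.
move=> W oW a Wa.
have [fs hfs] := inV_cfun_generated (proj1 (proj2_sig M)) oW Wa.
by exists fs => b ab; exact: hfs.
Qed.

Lemma counit_inv_cont : cont (M := sval M) (N := chu_weak (dualO M)) id.
Proof.
move=> W oW; apply: open_of_nbhs => a Wa; have [s hs] := oW a Wa.
exists (fun y => forall f : cdual (sval M), In f s -> sval f y = sval f a).
split=> //; apply: open_finI => f _.
exact: dcont_fiber_open (proj2 (proj2_sig f)).
Qed.

Definition top_counit :
  Defs.hom VQ_cat (fob weak_functor (fob dual_functor M)) M :=
  exist _ id (conj (lin_id (M := sval M)) counit_cont).

Definition top_counit_inv :
  Defs.hom VQ_cat M (fob weak_functor (fob dual_functor M)) :=
  exist _ id (conj (lin_id (M := sval M)) counit_inv_cont).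

Lemma top_counit_iso : is_iso top_counit.
Proof. by exists top_counit_inv; split; apply: sig_eq. Qed.

End Counit.

Lemma top_counit_nat (M M' : VQ_ob) (g : Defs.hom VQ_cat M M') :
  Defs.comp g (top_counit M)
  = Defs.comp (top_counit M') (fmap weak_functor (fmap dual_functor g)).
Proof. by case: g => [g [lg cg]]; apply: sig_eq. Qed.

Lemma chu_VQ_equiv : cat_equiv (chu_cat K) VQ_cat.
Proof.
exists weak_functor, dual_functor, chu_unit, top_counit.
split; [exact: chu_unit_nat|split; [exact: chu_unit_iso|split]].
- exact: top_counit_nat.
- exact: top_counit_iso.
Qed.

End Equivalence.

End TopologicalModules.

Theorem mainTheorem13 (K : comPzRingType) :
  self_injective K -> cogenerator K ->
  cat_equiv (chu_cat K) (Vs_cat K) /\ cat_equiv (chu_cat K) (Vw_cat K).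
Proof.
move=> si _; split.
- exact: (chu_VQ_equiv si (fun M _ => @strong_topT K M)).
- exact: (chu_VQ_equiv si (fun M VM =>
           cfun_generated_weak (inV_cfun_generated VM))).
Qed.
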